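(* Let $X$ be a fake weighted projective space with weights $(\lambda_0,\ldots,\lambda_n)$. If $X$ has at worst terminal (respectively canonical) singularities, then $\mathbb{P}(\lambda_0,\ldots,\lambda_n)$ has at worst terminal (respectively canonical) singularities.
   Context: Let $N\cong\mathbb{Z}^n$ be a lattice and $N_\mathbb{R}:=N\otimes_\mathbb{Z}\mathbb{R}$. Let $\rho_0,\ldots,\rho_n\in N$ be primitive lattice points with $N_\mathbb{R}=\sum_{i=0}^n\mathbb{R}_{\geq0}\rho_i$. There are positive integers $\lambda_0,\ldots,\lambda_n$ with $\gcd\{\lambda_0,\ldots,\lambda_n\}=1$, unique up to order, such that $\sum_{i=0}^n\lambda_i\rho_i=0$. The cones $\sigma_i$ generated by $\{\rho_j: j\neq i\}$, $i=0,\ldots,n$, generate a complete simplicial fan; the associated projective toric variety $X$ is called a fake weighted projective space with weights $(\lambda_0,\ldots,\lambda_n)$. $\mathbb{P}(\lambda_0,\ldots,\lambda_n)$ denotes the usual weighted projective space with these weights. *)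

From HB Require Import structures.
From mathcomp Require Import all_boot all_order all_algebra.
Set Implicit Arguments. Unset Strict Implicit. Unset Printing Implicit Defensive.
Import Order.TTheory GRing.Theory Num.Theory.
Local Open Scope ring_scope.

(* The lattice N = Z^n is 'rV[int]_n; N_Q = 'rV[rat]_n. *)
Definition toQ (n : nat) (v : 'rV[int]_n) : 'rV[rat]_n := map_mx intr v.

Definition primitive (n : nat) (v : 'rV[int]_n) : Prop :=
  v != 0 /\ forall (k : int) (w : 'rV[int]_n), v = k *: w -> `|k| = 1.

Definition fake_wps (n : nat) (rho : 'I_n.+1 -> 'rV[int]_n)
    (lam : 'I_n.+1 -> nat) : Prop :=
  [/\ forall i, primitive (rho i),
      forall v : 'rV[rat]_n, exists c : 'I_n.+1 -> rat,
        (forall i, 0 <= c i) /\ v = \sum_i c i *: toQ (rho i),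
      forall i, (0 < lam i)%N,
      \big[gcdn/0%N]_i lam i = 1%N
    & \sum_i (lam i)%:Z *: rho i = 0].

(* Toric terminal / canonical conditions (Cox-Little-Schenck Prop. 11.4.12)
   for the simplicial fan with maximal cones sigma_i = cone(rho_j : j <> i).
   For u = sum_{j<>i} c_j rho_j in sigma_i, the value <m_sigma_i, u> of the
   linear form equal to 1 on the rho_j (j<>i) is sum_j c_j. *)
Definition fwps_terminal (n : nat) (rho : 'I_n.+1 -> 'rV[int]_n) : Prop :=
  forall (i : 'I_n.+1) (u : 'rV[int]_n) (c : 'I_n.+1 -> rat),
    (forall j, 0 <= c j) -> c i = 0 ->
    toQ u = \sum_j c j *: toQ (rho j) -> \sum_j c j <= 1 ->
    u = 0 \/ exists2 j, j != i & u = rho j.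

Definition fwps_canonical (n : nat) (rho : 'I_n.+1 -> 'rV[int]_n) : Prop :=
  forall (i : 'I_n.+1) (u : 'rV[int]_n) (c : 'I_n.+1 -> rat),
    (forall j, 0 <= c j) -> c i = 0 ->
    toQ u = \sum_j c j *: toQ (rho j) -> \sum_j c j < 1 ->
    u = 0.

(* The weighted projective space P(lam_0,...,lam_n): lattice
   N' = Z^{n+1} / Z (lam_0,...,lam_n), rays = images of the standard basis
   vectors e_0..e_n, maximal cones sigma_i = cone(e_j : j <> i).
   Elements of N' are represented by a : 'rV[int]_n.+1. *)
Definition lamvec (n : nat) (lam : 'I_n.+1 -> nat) : 'rV[int]_n.+1 :=
  \row_i (lam i)%:Z.
Definition evec (n : nat) (j : 'I_n.+1) : 'rV[int]_n.+1 :=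
  \row_k (k == j)%:R.

Definition wps_eq (n : nat) (lam : 'I_n.+1 -> nat) (a b : 'rV[int]_n.+1) :=
  exists s : int, a - b = s *: lamvec lam.

(* [a] lies in sigma_i with coordinates c iff a = sum c_j e_j + t lam in Q^{n+1} *)
Definition wps_terminal (n : nat) (lam : 'I_n.+1 -> nat) : Prop :=
  forall (i : 'I_n.+1) (a : 'rV[int]_n.+1) (c : 'I_n.+1 -> rat) (t : rat),
    (forall j, 0 <= c j) -> c i = 0 ->
    toQ a = \sum_j c j *: toQ (evec j) + t *: toQ (lamvec lam) ->
    \sum_j c j <= 1 ->
    wps_eq lam a 0 \/ exists2 j, j != i & wps_eq lam a (evec j).

Definition wps_canonical (n : nat) (lam : 'I_n.+1 -> nat) : Prop :=
  forall (i : 'I_n.+1) (a : 'rV[int]_n.+1) (c : 'I_n.+1 -> rat) (t : rat),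
    (forall j, 0 <= c j) -> c i = 0 ->
    toQ a = \sum_j c j *: toQ (evec j) + t *: toQ (lamvec lam) ->
    \sum_j c j < 1 ->
    wps_eq lam a 0.

(* The linear map Z^{n+1} -> N sending e_j to rho_j has kernel exactly
   Z (lam_0, ..., lam_n): over Q the kernel is a line, because the rho_j span
   N_Q, and an integral point on the line through lam is an integral multiple
   of lam, because gcd lam_i = 1.  Hence it induces an embedding of the
   lattice of P(lam) into N which maps e_j to rho_j and the cone sigma_i of
   P(lam) onto the cone sigma_i of X, preserving the coordinates c_j.  A
   lattice point of P(lam) violating the terminal (canonical) condition is
   thus mapped to one violating it for X. *)

From HB Require Import structures.
From mathcomp Require Import all_boot all_order all_algebra.
Import Order.TTheory GRing.Theory Num.Theory.
Set Implicit Arguments. Unset Strict Implicit.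
Local Open Scope ring_scope.

Lemma row_full_of_span (F : fieldType) m n (A : 'M[F]_(m, n)) :
  (forall v : 'rV_n, exists c : 'I_m -> F, v = \sum_i c i *: row i A) ->
  row_full A.
Proof.
move=> span; rewrite -sub1mx; apply/row_subP => k.
have [c ->] := span (row k 1%:M).
apply/submxP; exists (\row_i c i); rewrite mulmx_sum_row.
by apply: eq_bigr => i _; rewrite mxE.
Qed.

Lemma ker_row_full_line (F : fieldType) n (A : 'M[F]_(n.+1, n)) (l x : 'rV_n.+1) :
  row_full A -> l != 0 -> l *m A = 0 -> x *m A = 0 -> exists q, x = q *: l.
Proof.
move=> fullA l0 /sub_kermxP lK /sub_kermxP xK.
have rankK : \rank (kermx A) = 1%N by rewrite mxrank_ker (eqP fullA) subSnn.
have /andP[_ Kl] : (l == kermx A)%MS.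
  by rewrite -(mxrank_leqif_eq lK).2 rankK rank_rV l0.
have /submxP[D ->] := submx_trans xK Kl.
by exists (D 0 0); rewrite {1}[D]mx11_scalar mul_scalar_mx.
Qed.

(* The denominator of q divides every lam i, hence their gcd. *)
Lemma int_of_mul_coprime (I : finType) (lam : I -> nat) (q : rat) :
  \big[gcdn/0%N]_i lam i = 1%N ->
  (forall i, exists z : int, q * (lam i)%:R = z%:~R) ->
  exists z : int, q = z%:~R.
Proof.
move=> gcd1 qlam; apply/ratArchimedean.intrP.
have den_dvd i : (`|denq q| %| lam i)%N.
  have [z qlamz] := qlam i.
  have : z * denq q = numq q * (lam i)%:Z.
    apply: (@intr_inj rat); rewrite !rmorphM /= -qlamz mulrAC.
    by rewrite -{1}(divq_num_den q) mulfVK // intr_eq0 denq_neq0.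
  move/(congr1 absz); rewrite !abszM /= => eq_abs.
  have coprime_den_num : coprime `|denq q| `|numq q|.
    by rewrite coprime_sym coprime_num_den.
  by rewrite -(Gauss_dvdr _ coprime_den_num) -eq_abs dvdn_mull.
have : (`|denq q| %| 1)%N.
  by rewrite -gcd1; elim/big_ind: _ => // x y dx dy; rewrite dvdn_gcd dx.
by rewrite dvdn1 -[denq q]gez0_abs ?ltW ?denq_gt0 // => /eqP ->.
Qed.

Definition rays_mx n (rho : 'I_n.+1 -> 'rV[int]_n) : 'M[int]_(n.+1, n) :=
  \matrix_i rho i.

Lemma toQ_mul n m (a : 'rV[int]_n) (A : 'M[int]_(n, m)) :
  toQ (a *m A) = toQ a *m map_mx intr A.
Proof. exact: map_mxM. Qed.

Lemma toQ0 n : toQ (0 : 'rV[int]_n) = 0.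
Proof. exact: map_mx0. Qed.

Lemma evec_mul_rays n (rho : 'I_n.+1 -> 'rV[int]_n) j :
  evec j *m rays_mx rho = rho j.
Proof.
rewrite -[RHS](rowK (fun i => rho i)) rowE; congr (_ *m _).
by apply/rowP => k; rewrite !mxE eqxx eq_sym.
Qed.

Lemma lamvec_mul_rays n (rho : 'I_n.+1 -> 'rV[int]_n) lam :
  \sum_i (lam i)%:Z *: rho i = 0 -> lamvec lam *m rays_mx rho = 0.
Proof.
move=> relation; rewrite mulmx_sum_row -[RHS]relation.
by apply: eq_bigr => i _; rewrite rowK mxE.
Qed.

Section FakeWeightedProjectiveSpace.

Variables (n : nat) (rho : 'I_n.+1 -> 'rV[int]_n) (lam : 'I_n.+1 -> nat).
Hypothesis fake : fake_wps rho lam.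

Lemma wps_eq_of_rays_eq (a b : 'rV[int]_n.+1) :
  a *m rays_mx rho = b *m rays_mx rho -> wps_eq lam a b.
Proof.
have [_ span lam_gt0 gcd1 relation] := fake.
move/eqP; rewrite -subr_eq0 -mulmxBl => /eqP /(congr1 (@toQ n)); set d := a - b.
rewrite toQ_mul toQ0 => dK.
have fullQ : row_full (map_mx (intr : int -> rat) (rays_mx rho)).
  apply: row_full_of_span => v; have [c [_ ->]] := span v.
  by exists c; apply: eq_bigr => i _; rewrite -map_row rowK.
have lamQ0 : toQ (lamvec lam) != 0.
  apply/eqP => /rowP /(_ ord0); rewrite !mxE => /eqP.
  by rewrite intr_eq0 eqz_nat => /eqP lam0; have := lam_gt0 ord0; rewrite lam0.
have lamK : toQ (lamvec lam) *m map_mx (intr : int -> rat) (rays_mx rho) = 0.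
  by rewrite -toQ_mul lamvec_mul_rays // toQ0.
have [q dq] := ker_row_full_line fullQ lamQ0 lamK dK.
have dq_at j : (d 0 j)%:~R = q * (lam j)%:R.
  by have := congr1 (fun w : 'rV[rat]_n.+1 => w 0 j) dq; rewrite !mxE.
have [z qz] : exists z : int, q = z%:~R.
  by apply: (int_of_mul_coprime gcd1) => j; exists (d 0 j); rewrite dq_at.
exists z; apply/rowP => j; apply: (@intr_inj rat).
by rewrite dq_at qz !mxE rmorphM.
Qed.

(* Adding t lam does not change the image, so the cone coordinates carry over. *)
Lemma toQ_mul_rays_cone (a : 'rV[int]_n.+1) (c : 'I_n.+1 -> rat) (t : rat) :
  toQ a = \sum_j c j *: toQ (evec j) + t *: toQ (lamvec lam) ->
  toQ (a *m rays_mx rho) = \sum_j c j *: toQ (rho j).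
Proof.
have [_ _ _ _ relation] := fake.
rewrite toQ_mul => ->; rewrite mulmxDl mulmx_suml -scalemxAl -toQ_mul.
rewrite lamvec_mul_rays // toQ0 scaler0 addr0.
by apply: eq_bigr => j _; rewrite -scalemxAl -toQ_mul evec_mul_rays.
Qed.

End FakeWeightedProjectiveSpace.

Theorem mainTheorem3 (n : nat) (rho : 'I_n.+1 -> 'rV[int]_n)
    (lam : 'I_n.+1 -> nat) :
  fake_wps rho lam ->
  (fwps_terminal rho -> wps_terminal lam) /\
  (fwps_canonical rho -> wps_canonical lam).
Proof.
move=> fake; split=> [terminal | canonical] i a c t c_ge0 ci0
  /(toQ_mul_rays_cone fake) a_cone sum_c.
- have [a0 | [j ji aj]] := terminal i _ c c_ge0 ci0 a_cone sum_c.
    by left; apply: (wps_eq_of_rays_eq fake); rewrite a0 mul0mx.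
  by right; exists j => //; apply: (wps_eq_of_rays_eq fake); rewrite aj evec_mul_rays.
- apply: (wps_eq_of_rays_eq fake).
  by rewrite (canonical i _ c c_ge0 ci0 a_cone sum_c) mul0mx.
Qed.
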